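(* Let $W$ be a finite set with $w\ge1$ elements, $\mathcal G=\{G_1,\dots,G_h\}$ a family of nonempty subsets of $W$, $\tau_k$ the number of $k$-element transversals of $\mathcal G$ and $q_k=\tau_k/\binom wk$. Draw elements of $W$ independently and uniformly at random with replacement, and let $T$ be the smallest $n$ such that the set of elements drawn in the first $n$ draws is a transversal of $\mathcal G$. Then for each $k\in\{1,\dots,w\}$, the probability that $T$ equals the draw at which the $k$-th distinct element first appears is $q_k-q_{k-1}$. Moreover $$\operatorname{Var}(T)=\sum_{k=0}^{w-1}(1-q_k)\left(\frac{w(w+k)}{(w-k)^2}+\frac{2w^2}{w-k}\big(H(w)-H(w-k)\big)\right)-\mathbb E[T]^2,$$ where $H(m)=\sum_{j=1}^m\frac1j$ and $H(0)=0$.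
   Context: A set $X\subseteq W$ is a transversal of $\mathcal G$ if $X\cap G_i\neq\emptyset$ for all $i$. *)

From Stdlib Require Import Reals.
From mathcomp Require Import all_boot.
Set Implicit Arguments. Unset Strict Implicit. Unset Printing Implicit Defensive.

Section Defs.
Variable W : finType.

Definition transversal (Gs : seq {set W}) (X : {set W}) : bool :=
  all (fun G => X :&: G != set0) Gs.

Definition drawn n (f : {ffun 'I_n -> W}) (m : nat) : {set W} :=
  f @: [set i : 'I_n | (i < m)%N].

(* the event "T = n", decided by the first n draws:
   T = n is the least m with drawn m a transversal *)
Definition T_is (Gs : seq {set W}) n (f : {ffun 'I_n -> W}) : bool :=
  transversal Gs (drawn f n) && [forall m : 'I_n, ~~ transversal Gs (drawn f m)].

(* the event "D_k = n": n is the draw at which the k-th distinct element first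
   appears, i.e. the least m with at least k distinct elements drawn *)
Definition Dk_is (k : nat) n (f : {ffun 'I_n -> W}) : bool :=
  (k <= #|drawn f n|)%N && [forall m : 'I_n, (#|drawn f m| < k)%N].

(* P(T = n) under i.i.d. uniform draws *)
Definition probT (Gs : seq {set W}) (n : nat) : R :=
  Rdiv (INR #|[set f : {ffun 'I_n -> W} | T_is Gs f]|) (INR (#|W| ^ n)%N).

Definition probTD (Gs : seq {set W}) (k n : nat) : R :=
  Rdiv (INR #|[set f : {ffun 'I_n -> W} | T_is Gs f && Dk_is k f]|) (INR (#|W| ^ n)%N).

Definition tau (Gs : seq {set W}) (k : nat) : nat :=
  #|[set X : {set W} | (#|X| == k) && transversal Gs X]|.

Definition qk (Gs : seq {set W}) (k : nat) : R :=
  Rdiv (INR (tau Gs k)) (INR 'C(#|W|, k)).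

End Defs.

Fixpoint harm (m : nat) : R :=
  match m with
  | O => R0
  | S m' => Rplus (harm m') (Rinv (INR (S m')))
  end.

(* Splitting n+1 draws into
   the first n draws g and the last draw x, the event "T = n+1" holds iff x
   completes the revealed set S = drawn g n to a transversal, and then
   D_k = n+1 for k = #|S|+1.  The number of g revealing exactly S depends only
   on #|S| (it is the number [onto_count n #|S|] of maps onto a #|S|-set), and
   the number of completing pairs (S, x) with #|S| = j is
   (j+1) tau_(j+1) - (w-j) tau_j.  Hence
     P(T = D_(j+1) = n+1) = (q_(j+1) - q_j) (w-j)/w P(X_n = j),
   X_n being the number of distinct values among the first n draws.

   P(X_n = j) obeys the
   coupon-collector recurrence; from it the series of P(X_n = j),
   (n+1) P(X_n = j) and (n+1)^2 P(X_n = j) are summed by induction on j, each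
   being a growing solution of an affine recurrence.  Summing over j
   (section Assembly) gives P(T = D_k) and the first two moments of T, and
   Abel summation turns the second moment into the closed form. *)
From Pilot Require Import Defs.
From Stdlib Require Import Reals Lra Lia.
From mathcomp Require Import all_boot zify.
Set Implicit Arguments. Unset Strict Implicit. Unset Printing Implicit Defensive.

(* Number of maps from 'I_n onto a fixed j-element set: the last point goes
   to one of the j values y, and the first n points cover either all j values
   or all values but y. *)
Fixpoint onto_count (n j : nat) : nat :=
  if n is n'.+1 then j * (onto_count n' j + onto_count n' j.-1) else (j == 0 : nat).

Lemma onto_countS n j :
  onto_count n.+1 j.+1 = j.+1 * (onto_count n j.+1 + onto_count n j).
Proof. by []. Qed.

Section Draws.
Variable W : finType.

Lemma drawn_mono n (f : {ffun 'I_n -> W}) m m' :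
  m <= m' -> drawn f m \subset drawn f m'.
Proof.
move=> le_mm'; apply: imsetS; apply/subsetP => i; rewrite !inE => lt_im.
exact: leq_trans le_mm'.
Qed.

Lemma drawn0 n (f : {ffun 'I_n -> W}) : drawn f 0 = set0.
Proof. by apply/setP => y; rewrite inE; apply/imsetP => -[i]; rewrite inE. Qed.

Definition snoc_draw n (g : {ffun 'I_n -> W}) (x : W) : {ffun 'I_n.+1 -> W} :=
  [ffun i => if unlift ord_max i is Some j then g j else x].

Definition init_draws n (f : {ffun 'I_n.+1 -> W}) : {ffun 'I_n -> W} :=
  [ffun j => f (widen_ord (leqnSn n) j)].

Lemma widen_lift_max n (j : 'I_n) : widen_ord (leqnSn n) j = lift ord_max j.
Proof. by apply: ord_inj; rewrite lift_max. Qed.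

Lemma snoc_draw_last n g x : @snoc_draw n g x ord_max = x.
Proof. by rewrite ffunE unlift_none. Qed.

Lemma snoc_draw_init n g x (j : 'I_n) : @snoc_draw n g x (widen_ord (leqnSn n) j) = g j.
Proof. by rewrite widen_lift_max ffunE liftK. Qed.

Lemma init_snoc n g x : init_draws (@snoc_draw n g x) = g.
Proof. by apply/ffunP => j; rewrite ffunE snoc_draw_init. Qed.

Lemma snoc_init n (f : {ffun 'I_n.+1 -> W}) : snoc_draw (init_draws f) (f ord_max) = f.
Proof.
apply/ffunP => i; rewrite ffunE; case: (unliftP ord_max i) => [j -> | ->] //.
by rewrite ffunE widen_lift_max.
Qed.

Lemma sum_draws_snoc n (F : {ffun 'I_n.+1 -> W} -> nat) :
  \sum_f F f = \sum_(g : {ffun 'I_n -> W}) \sum_(x : W) F (snoc_draw g x).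
Proof.
rewrite pair_big /= (reindex (fun p : {ffun 'I_n -> W} * W => snoc_draw p.1 p.2)) //=.
exists (fun f => (init_draws f, f ord_max)) => [[g x] _ | f _] /=.
  by rewrite init_snoc snoc_draw_last.
exact: snoc_init.
Qed.

Lemma drawn_snoc_init n g x : drawn (@snoc_draw n g x) n = drawn g n.
Proof.
apply/setP => y; apply/imsetP/imsetP => -[i]; rewrite inE => lt_in ->.
- case: (unliftP ord_max i) lt_in => [j -> _ | -> ]; last by rewrite /= ltnn.
  by exists j; rewrite ?inE ?ltn_ord // ffunE liftK.
- by exists (widen_ord (leqnSn n) i); rewrite ?inE /= ?ltn_ord ?snoc_draw_init.
Qed.

Lemma drawn_snoc n g x : drawn (@snoc_draw n g x) n.+1 = x |: drawn g n.
Proof.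
apply/setP => y; rewrite in_setU1; apply/imsetP/orP.
- case=> i _ ->; case: (unliftP ord_max i) => [j -> | ->].
  + by right; rewrite ffunE liftK; apply/imsetP; exists j; rewrite ?inE ?ltn_ord.
  + by left; rewrite snoc_draw_last.
- case=> [/eqP -> | /imsetP [j _ ->]].
  + by exists ord_max; rewrite ?inE ?snoc_draw_last.
  + by exists (widen_ord (leqnSn n) j); rewrite ?inE ?ltn_ord ?snoc_draw_init.
Qed.

Definition n_revealing n (S : {set W}) : nat :=
  \sum_(g : {ffun 'I_n -> W}) (drawn g n == S).

Lemma sum_by_revealed n (F : {set W} -> nat) :
  \sum_(g : {ffun 'I_n -> W}) F (drawn g n) = \sum_(S : {set W}) n_revealing n S * F S.
Proof.
under [RHS]eq_bigr do rewrite big_distrl /=.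
rewrite exchange_big /=; apply: eq_bigr => g _.
rewrite (bigD1 (drawn g n)) //= eqxx mul1n big1 ?addn0 // => S /negbTE.
by rewrite eq_sym => ->.
Qed.

Lemma n_revealing0 S : n_revealing 0 S = (S == set0).
Proof.
rewrite /n_revealing; under eq_bigr do rewrite drawn0.
by rewrite sum_nat_const card_ffun card_ord expn0 mul1n eq_sym.
Qed.

(* The last draw x lies in S; the first n draws reveal S or S minus x. *)
Lemma n_revealingS n S :
  n_revealing n.+1 S = \sum_(x : W) (x \in S) * (n_revealing n S + n_revealing n (S :\ x)).
Proof.
rewrite /n_revealing sum_draws_snoc.
rewrite exchange_big /=; apply: eq_bigr => x _.
under eq_bigr do rewrite drawn_snoc.
rewrite (sum_by_revealed n (fun S' => nat_of_bool (x |: S' == S))).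
have [xS | xNS] := boolP (x \in S); last first.
  rewrite mul0n big1 // => S' _; case: eqP => [E|]; last by rewrite muln0.
  by move: xNS; rewrite -E setU11.
have SxNS : S :\ x != S by apply/eqP => E; move: (setD11 x S); rewrite E xS.
rewrite mul1n (bigD1 S) //= (bigD1 (S :\ x)) //= setD1K // (setUidPr _) ?sub1set //.
rewrite eqxx !muln1 addnA big1 ?addn0 // => S' /andP [S'NS S'NSx].
case: eqP => [E|]; last by rewrite muln0.
have [xS'|xNS'] := boolP (x \in S').
  by move: S'NS; rewrite -E (setUidPr _) ?sub1set ?eqxx.
by move: S'NSx; rewrite -E setU1K ?eqxx.
Qed.

Lemma n_revealing_onto n S : n_revealing n S = onto_count n #|S|.
Proof.
elim: n S => [|n IH] S; first by rewrite n_revealing0 /= cards_eq0.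
rewrite n_revealingS /=.
transitivity (\sum_(x : W) (x \in S) * (onto_count n #|S| + onto_count n #|S|.-1)).
  apply: eq_bigr => x _; case: (boolP (x \in S)) => xS //.
  by rewrite !IH (cardsD1 x S) xS.
rewrite -big_distrl /= -sum1_card; congr (_ * _).
by rewrite [RHS]big_mkcond; apply: eq_bigr => x _; case: (x \in S).
Qed.

End Draws.

Section Transversals.
Variables (W : finType) (Gs : seq {set W}).
Notation tr := (Defs.transversal Gs).

Lemma transversal_mono (A B : {set W}) : A \subset B -> tr A -> tr B.
Proof.
move=> sAB /allP trA; apply/allP => G GinGs; apply: contra (trA G GinGs) => /eqP AG0.
by rewrite -subset0 -AG0 setSI.
Qed.

Definition completes (S : {set W}) (x : W) : bool := ~~ tr S && tr (x |: S).

Lemma completes_notin S x : completes S x -> x \notin S.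
Proof. by case/andP=> trNS; apply: contraL => xS; rewrite (setUidPr _) ?sub1set. Qed.

Lemma T_is_snoc n (g : {ffun 'I_n -> W}) x :
  T_is Gs (snoc_draw g x) = completes (drawn g n) x.
Proof.
rewrite /T_is /completes drawn_snoc andbC; congr (_ && _).
apply/forallP/idP => [notr | trNg m].
- by have := notr ord_max; rewrite /= drawn_snoc_init.
- apply: contra trNg => trm; rewrite -(drawn_snoc_init g x).
  by apply: transversal_mono trm; apply: drawn_mono; rewrite -ltnS ltn_ord.
Qed.

(* When T = n+1, the last draw is new, so it reveals the (#|S|+1)-th element. *)
Lemma Dk_is_snoc n (g : {ffun 'I_n -> W}) x k :
  T_is Gs (snoc_draw g x) -> Dk_is k (snoc_draw g x) = (#|drawn g n|.+1 == k).
Proof.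
rewrite T_is_snoc => /completes_notin xNg.
rewrite /Dk_is drawn_snoc cardsU1 xNg eqn_leq andbC; congr (_ && _).
apply/forallP/idP => [small | lt_gk m].
- by have := small ord_max; rewrite /= drawn_snoc_init.
- apply: leq_ltn_trans lt_gk; rewrite -(drawn_snoc_init g x); apply: subset_leq_card.
  by apply: drawn_mono; rewrite -ltnS ltn_ord.
Qed.

Definition n_completions k : nat :=
  \sum_(S : {set W}) \sum_(x : W) (completes S x && (#|S| == k)).

(* Counting form of P(T = D_(k+1) = n+1) = P(X_n = k) * P(completion | X_n = k). *)
Lemma count_TD n k :
  \sum_(f : {ffun 'I_n.+1 -> W}) (T_is Gs f && Dk_is k.+1 f) = onto_count n k * n_completions k.
Proof.
rewrite sum_draws_snoc.
have split_event (g : {ffun 'I_n -> W}) x : T_is Gs (snoc_draw g x) && Dk_is k.+1 (snoc_draw g x) =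
                       completes (drawn g n) x && (#|drawn g n| == k).
  case TS: (T_is Gs (snoc_draw g x)); last by rewrite -T_is_snoc TS.
  by rewrite (Dk_is_snoc _ TS) eqSS -T_is_snoc TS.
under eq_bigr do under eq_bigr do rewrite split_event.
rewrite (sum_by_revealed n (fun S => \sum_x (completes S x && (#|S| == k)))).
rewrite /n_completions big_distrr /=; apply: eq_bigr => S _; rewrite n_revealing_onto.
case: (eqVneq #|S| k) => [-> // | neSk].
by rewrite big1 ?muln0 // => x _; rewrite andbF.
Qed.

(* When T = n+1, the draw n+1 is D_(k+1) for exactly one k < #|W|. *)
Lemma count_T n : \sum_(f : {ffun 'I_n.+1 -> W}) (T_is Gs f : nat) =
  \sum_(k < #|W|) \sum_(f : {ffun 'I_n.+1 -> W}) (T_is Gs f && Dk_is k.+1 f).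
Proof.
rewrite exchange_big /=; apply: eq_bigr => f _.
case TS: (T_is Gs f); last by rewrite big1.
rewrite -(snoc_init f) in TS *.
have lt_gW : #|drawn (init_draws f) n| < #|W|.
  apply: leq_trans (max_card (f ord_max |: drawn (init_draws f) n)).
  by rewrite cardsU1 completes_notin -?T_is_snoc.
under eq_bigr do rewrite (Dk_is_snoc _ TS) eqSS /=.
rewrite (bigD1 (Ordinal lt_gW)) //= eqxx big1 // => k neq.
by case: eqP => // E; case/negP: neq; apply/eqP/ord_inj; rewrite /= E.
Qed.

Lemma tau_sum k : tau Gs k = \sum_(X : {set W}) ((#|X| == k) && tr X).
Proof.
by rewrite /tau -sum1_card big_mkcond /=; apply: eq_bigr => X _; rewrite inE; case: (_ && _).
Qed.

Lemma tau_outside k : (#|W| - k) * tau Gs k =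
  \sum_(S : {set W}) \sum_(x : W) (tr S && (#|S| == k) && (x \notin S)).
Proof.
rewrite tau_sum big_distrr /=; apply: eq_bigr => S _.
case: (eqVneq #|S| k) => [<- | neSk]; last first.
  by rewrite /= muln0 big1 // => x _; rewrite andbF.
rewrite /=; case: (tr S) => /=; last by rewrite muln0 big1.
rewrite muln1 -(cardsC S) addKn -sum1_card big_mkcond /=.
by apply: eq_bigr => x _; rewrite inE; case: (x \in S).
Qed.

(* Pairs (S, x) with x outside S and x |: S a (k+1)-transversal: a pointed
   (k+1)-transversal. *)
Lemma tau_pointed k :
  \sum_(S : {set W}) \sum_(x : W) ((#|S| == k) && (x \notin S) && tr (x |: S)) =
  k.+1 * tau Gs k.+1.
Proof.
rewrite exchange_big /=.
transitivity (\sum_(x : W) \sum_(X : {set W}) ((#|X| == k.+1) && (x \in X) && tr X)).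
  apply: eq_bigr => x _.
  rewrite [RHS](bigID (fun X : {set W} => x \in X)) /= [X in _ + X]big1 ?addn0; last first.
    by move=> X /negbTE ->; rewrite andbF.
  rewrite [RHS](reindex_onto (fun S : {set W} => x |: S) (fun X => X :\ x)) /=; last first.
    by move=> X; exact: setD1K.
  rewrite [RHS]big_mkcond; apply: eq_bigr => S _; rewrite setU11 /=.
  case: (boolP (x \in S)) => xS /=; last by rewrite setU1K // eqxx cardsU1 xS /= eqSS andbT.
  rewrite andbF (setUidPr _) ?sub1set //.
  suff -> : (S :\ x == S) = false by [].
  by apply/negbTE/eqP => E; move: (setD11 x S); rewrite E xS.
rewrite exchange_big tau_sum big_distrr /=; apply: eq_bigr => X _.
case: (eqVneq #|X| k.+1) => [<- | neX]; last first.
  by rewrite big1 ?muln0 // => x _; rewrite (negbTE neX).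
case: (tr X) => /=; last by rewrite muln0 big1 // => x; rewrite andbF.
by rewrite muln1 -sum1_card [RHS]big_mkcond; apply: eq_bigr => x _; rewrite andbT.
Qed.

(* A pointed (k+1)-transversal (x |: S, x) arises either from a k-transversal
   S, or from a completion of a non-transversal S. *)
Lemma n_completions_tau k :
  n_completions k + (#|W| - k) * tau Gs k = k.+1 * tau Gs k.+1.
Proof.
rewrite tau_outside -tau_pointed /n_completions -big_split; apply: eq_bigr => S _.
rewrite -big_split; apply: eq_bigr => x _ /=; rewrite /completes.
case: (boolP (x \in S)) => xS /=.
  by rewrite (setUidPr _) ?sub1set //; case: (tr S); case: (#|S| == k).
case trS: (tr S) => /=.
  by rewrite (transversal_mono (subsetUr [set x] S) trS); case: (#|S| == k).
by rewrite addn0 andbT andbC.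
Qed.

End Transversals.

Local Open Scope R_scope.

Section SeriesTools.

Lemma Un_cv_ext (U V : nat -> R) l : (forall n, U n = V n) -> Un_cv U l -> Un_cv V l.
Proof.
move=> UV cvU eps eps_gt0; have [N HN] := cvU eps eps_gt0.
by exists N => n le_Nn; rewrite -UV; apply: HN.
Qed.

Lemma Un_cv_const (c : R) : Un_cv (fun _ => c) c.
Proof.
move=> eps eps_gt0; exists 0%nat => n _.
by rewrite /R_dist Rminus_diag Rabs_R0.
Qed.

Lemma Un_cv_scal (U : nat -> R) c l : Un_cv U l -> Un_cv (fun n => c * U n) (c * l).
Proof. by move=> cvU; apply: CV_mult => //; apply: Un_cv_const. Qed.

Lemma Un_cv_succ (U : nat -> R) l : Un_cv U l <-> Un_cv (fun n => U n.+1) l.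
Proof.
split=> cvU eps eps_gt0; have [N HN] := cvU eps eps_gt0.
- by exists N => n le_Nn; apply: HN; rewrite /ge in le_Nn *; lia.
- exists N.+1 => -[|n] le_Nn; first by rewrite /ge in le_Nn; lia.
  by apply: HN; rewrite /ge in le_Nn *; lia.
Qed.

Lemma sum_f_R0_succ (f : nat -> R) N :
  sum_f_R0 f N.+1 = f 0%nat + sum_f_R0 (fun n => f n.+1) N.
Proof.
elim: N => [|N IH]; first by rewrite /=; ring.
by rewrite tech5 IH tech5; ring.
Qed.

Lemma series_cv_succ (f : nat -> R) l :
  Un_cv (sum_f_R0 (fun n => f n.+1)) l -> Un_cv (sum_f_R0 f) (f 0%nat + l).
Proof.
move=> cv_shift; apply/Un_cv_succ.
apply: (Un_cv_ext (U := fun N => f 0%nat + sum_f_R0 (fun n => f n.+1) N)).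
  by move=> N; rewrite sum_f_R0_succ.
by apply: CV_plus => //; apply: Un_cv_const.
Qed.

Lemma sum_f_R0_scal (f : nat -> R) c N :
  sum_f_R0 (fun n => c * f n) N = c * sum_f_R0 f N.
Proof. by rewrite scal_sum; apply: PartSum.sum_eq => n _; ring. Qed.

Lemma finite_sum_series_cv K (F : nat -> nat -> R) (L : nat -> R) :
  (forall j, (j <= K)%N -> Un_cv (sum_f_R0 (F j)) (L j)) ->
  Un_cv (sum_f_R0 (fun n => sum_f_R0 (fun j => F j n) K)) (sum_f_R0 L K).
Proof.
elim: K => [|K IH] cvF; first exact: cvF.
apply: (Un_cv_ext (U := fun N => sum_f_R0 (fun n => sum_f_R0 (fun j => F j n) K) N +
                               sum_f_R0 (F K.+1) N)).
  by move=> N; rewrite -sum_plus.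
apply: CV_plus; last exact: cvF.
by apply: IH => j le_jK; apply: cvF; rewrite leqW.
Qed.

Lemma growing_series (f : nat -> R) : (forall n, 0 <= f n) -> Un_growing (sum_f_R0 f).
Proof. by move=> f_ge0 n /=; have := f_ge0 n.+1; lra. Qed.

Lemma growing_plus (U V : nat -> R) :
  Un_growing U -> Un_growing V -> Un_growing (fun n => U n + V n).
Proof. by move=> gU gV n; have := gU n; have := gV n; lra. Qed.

Lemma growing_scal (U : nat -> R) c : 0 <= c -> Un_growing U -> Un_growing (fun n => c * U n).
Proof. by move=> c_ge0 gU n; have := gU n; nra. Qed.

Lemma affine_rec_cv (Y r : nat -> R) (a lr : R) : 0 <= a < 1 ->
  Un_growing Y -> Un_growing r -> Un_cv r lr ->
  (forall N, Y N.+1 = a * Y N + r N) -> Un_cv Y (lr / (1 - a)).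
Proof.
move=> a01 gY gr cvr recY.
have Y_le N : Y N.+1 <= lr / (1 - a).
  apply: (Rmult_le_reg_l (1 - a)); first lra.
  have -> : (1 - a) * (lr / (1 - a)) = lr by field; lra.
  have := recY N; have := gY N; have := growing_ineq _ _ gr cvr N; nra.
have [l cvY] : {l | Un_cv Y l}.
  apply: growing_cv => //; exists (lr / (1 - a)) => _ [[|i] ->]; last exact: Y_le.
  exact: Rle_trans (gY 0%nat) (Y_le 0%nat).
have fixed_l : l = a * l + lr.
  apply: (UL_sequence (fun N => Y N.+1)); first by move/Un_cv_succ: cvY.
  apply: (Un_cv_ext (U := fun N => a * Y N + r N)) => // .
  by apply: CV_plus => //; apply: Un_cv_scal.
suff -> : lr / (1 - a) = l by [].
by rewrite (_ : lr = (1 - a) * l); [field | ]; lra.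
Qed.

Lemma telescope (q : nat -> R) K : sum_f_R0 (fun j => q j.+1 - q j) K = q K.+1 - q 0%nat.
Proof. by elim: K => [|K IH] /=; [ring | rewrite IH; ring]. Qed.

Lemma abel_summation (q D : nat -> R) K :
  sum_f_R0 (fun j => (q j.+1 - q j) * sum_f_R0 D j) K =
  sum_f_R0 (fun k => (q K.+1 - q k) * D k) K.
Proof.
elim: K => [|K IH]; first by rewrite /=; ring.
rewrite [LHS]/= IH [RHS]/=.
rewrite (PartSum.sum_eq (fun k => (q K.+2 - q k) * D k)
                        (fun k => (q K.+1 - q k) * D k + (q K.+2 - q K.+1) * D k)).
  by rewrite sum_plus sum_f_R0_scal /=; ring.
by move=> n _; ring.
Qed.

End SeriesTools.

(* With w equally likely values and j already seen: expected number of draws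
   spent with exactly j values seen, and the first two moments of the draw
   D_(j+1) at which the (j+1)-th distinct value appears. *)
Definition occupation_time (w j : nat) : R := INR w / (INR w - INR j).

Definition coupon_mean (w j : nat) : R := sum_f_R0 (occupation_time w) j.

Definition coupon_sq (w j : nat) : R :=
  sum_f_R0 (fun i => 2 * occupation_time w i * coupon_mean w i - occupation_time w i) j.

Lemma INR_ltn (a b : nat) : (a < b)%N -> INR a < INR b.
Proof. by move/ltP; apply: lt_INR. Qed.

(* x n j plays the role of P(X_n = j), X_n the number of distinct values among
   n uniform draws from w values: X is the coupon-collector Markov chain. *)
Section CouponChain.
Variables (w : nat) (x : nat -> nat -> R).
Hypothesis x_ge0 : forall n j, 0 <= x n j.
Hypothesis x_start0 : x 0%nat 0%nat = 1.
Hypothesis x_startS : forall j, x 0%nat j.+1 = 0.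
Hypothesis x_step0 : forall n, x n.+1 0%nat = 0.
Hypothesis x_stepS : forall n j, (j.+1 < w)%N ->
  x n.+1 j.+1 = INR j.+1 / INR w * x n j.+1 + (INR w - INR j) / INR w * x n j.

Definition moment (p j N : nat) : R := sum_f_R0 (fun n => (INR n + 1) ^ p * x n j) N.

Lemma moment_growing p j : Un_growing (moment p j).
Proof.
apply: growing_series => n; apply: Rmult_le_pos => //.
by apply: pow_le; have := pos_INR n; lra.
Qed.

Lemma moment_state0 p N : moment p 0 N = 1.
Proof.
rewrite /moment; elim: N => [|N IH] /=; first by rewrite x_start0 Rplus_0_l pow1; ring.
by rewrite IH x_step0; ring.
Qed.

Section Step.
Variable j : nat.
Hypothesis lt_j1w : (j.+1 < w)%N.
Let a := INR j.+1 / INR w.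
Let b := (INR w - INR j) / INR w.

(* In state j+1 < w the chain stays with probability a = (j+1)/w and
   state j moves up with probability b = (w-j)/w. *)
Lemma stay_range : 0 <= a < 1.
Proof.
have := INR_ltn lt_j1w; have := pos_INR j.+1 => ge0 lt1; rewrite /a; split.
  by apply: Rmult_le_pos => //; apply/Rlt_le/Rinv_0_lt_compat; lra.
by apply: (Rmult_lt_reg_r (INR w)); [lra | rewrite /Rdiv Rmult_assoc Rinv_l; lra].
Qed.

Lemma move_ge0 : 0 <= b.
Proof.
have := INR_ltn lt_j1w; rewrite S_INR => lt_jw; have := pos_INR j => ge0.
by apply: Rmult_le_pos; [lra | apply/Rlt_le/Rinv_0_lt_compat; lra].
Qed.

Lemma weighted_step (g : nat -> R) N :
  sum_f_R0 (fun n => g n * x n j.+1) N.+1 =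
  sum_f_R0 (fun n => g n.+1 * (a * x n j.+1 + b * x n j)) N.
Proof.
rewrite sum_f_R0_succ x_startS Rmult_0_r Rplus_0_l.
by apply: PartSum.sum_eq => n _; rewrite x_stepS.
Qed.

Lemma moment0_rec N : moment 0 j.+1 N.+1 = a * moment 0 j.+1 N + b * moment 0 j N.
Proof.
rewrite /moment weighted_step -!sum_f_R0_scal -sum_plus.
by apply: PartSum.sum_eq => n _; ring.
Qed.

Lemma moment1_rec N : moment 1 j.+1 N.+1 =
  a * moment 1 j.+1 N + (a * moment 0 j.+1 N + b * (moment 1 j N + moment 0 j N)).
Proof.
rewrite /moment weighted_step.
rewrite (PartSum.sum_eq _ (fun n => a * ((INR n + 1) ^ 1 * x n j.+1) +
   (a * ((INR n + 1) ^ 0 * x n j.+1) +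
    (b * ((INR n + 1) ^ 1 * x n j) + b * ((INR n + 1) ^ 0 * x n j))))).
  by rewrite !sum_plus !sum_f_R0_scal; ring.
by move=> n _; rewrite S_INR; ring.
Qed.

Lemma moment2_rec N : moment 2 j.+1 N.+1 =
  a * moment 2 j.+1 N + (a * (2 * moment 1 j.+1 N + moment 0 j.+1 N) +
                         b * (moment 2 j N + 2 * moment 1 j N + moment 0 j N)).
Proof.
rewrite /moment weighted_step.
rewrite (PartSum.sum_eq _ (fun n => a * ((INR n + 1) ^ 2 * x n j.+1) +
   (2 * a * ((INR n + 1) ^ 1 * x n j.+1) + a * ((INR n + 1) ^ 0 * x n j.+1) +
   (b * ((INR n + 1) ^ 2 * x n j) + 2 * b * ((INR n + 1) ^ 1 * x n j) +
    b * ((INR n + 1) ^ 0 * x n j))))).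
  by rewrite !sum_plus !sum_f_R0_scal; ring.
by move=> n _; rewrite S_INR; ring.
Qed.

Hypothesis lim0 : Un_cv (moment 0 j) (occupation_time w j).
Hypothesis lim1 : Un_cv (moment 1 j) (occupation_time w j * coupon_mean w j).
Hypothesis lim2 : Un_cv (moment 2 j) (occupation_time w j * coupon_sq w j).

Lemma moment0_cv_step : Un_cv (moment 0 j.+1) (occupation_time w j.+1).
Proof.
have := INR_ltn lt_j1w; rewrite S_INR => lt_jw; have := pos_INR j => ge0.
rewrite (_ : occupation_time w j.+1 = b * occupation_time w j / (1 - a)); last first.
  by rewrite /occupation_time /a /b S_INR; field; lra.
apply: (affine_rec_cv stay_range (moment_growing 0 j.+1) _ _ moment0_rec).
  exact: growing_scal move_ge0 (moment_growing 0 j).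
exact: Un_cv_scal.
Qed.

Lemma moment1_cv_step :
  Un_cv (moment 1 j.+1) (occupation_time w j.+1 * coupon_mean w j.+1).
Proof.
have := INR_ltn lt_j1w; rewrite S_INR => lt_jw; have := pos_INR j => ge0.
rewrite (_ : occupation_time w j.+1 * coupon_mean w j.+1 =
  (a * occupation_time w j.+1 +
   b * (occupation_time w j * coupon_mean w j + occupation_time w j)) / (1 - a)); last first.
  by rewrite /coupon_mean tech5 /occupation_time /a /b !S_INR; field; lra.
apply: (affine_rec_cv stay_range (moment_growing 1 j.+1) _ _ moment1_rec).
  apply: growing_plus; first exact: growing_scal (proj1 stay_range) (moment_growing 0 j.+1).
  apply: growing_scal move_ge0 _.
  exact: growing_plus (moment_growing 1 j) (moment_growing 0 j).
apply: CV_plus; first exact: Un_cv_scal moment0_cv_step.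
by apply: Un_cv_scal; apply: CV_plus.
Qed.

Lemma moment2_cv_step :
  Un_cv (moment 2 j.+1) (occupation_time w j.+1 * coupon_sq w j.+1).
Proof.
have := INR_ltn lt_j1w; rewrite S_INR => lt_jw; have := pos_INR j => ge0.
rewrite (_ : occupation_time w j.+1 * coupon_sq w j.+1 =
  (a * (2 * (occupation_time w j.+1 * coupon_mean w j.+1) + occupation_time w j.+1) +
   b * (occupation_time w j * coupon_sq w j +
        2 * (occupation_time w j * coupon_mean w j) + occupation_time w j)) / (1 - a));
  last first.
  by rewrite /coupon_sq /coupon_mean !tech5 /occupation_time /a /b !S_INR; field; lra.
apply: (affine_rec_cv stay_range (moment_growing 2 j.+1) _ _ moment2_rec).
  apply: growing_plus; apply: growing_scal; [exact: (proj1 stay_range) | | exact: move_ge0 |].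
  - apply: growing_plus _ (moment_growing 0 j.+1).
    by apply: growing_scal (moment_growing 1 j.+1); lra.
  - apply: growing_plus _ (moment_growing 0 j); apply: growing_plus (moment_growing 2 j) _.
    by apply: growing_scal (moment_growing 1 j); lra.
apply: CV_plus; apply: Un_cv_scal; apply: CV_plus.
- exact: Un_cv_scal moment1_cv_step.
- exact: moment0_cv_step.
- by apply: CV_plus => //; apply: Un_cv_scal.
- exact: lim0.
Qed.

End Step.

Lemma moment_limits j : (j < w)%N ->
  [/\ Un_cv (moment 0 j) (occupation_time w j),
      Un_cv (moment 1 j) (occupation_time w j * coupon_mean w j) &
      Un_cv (moment 2 j) (occupation_time w j * coupon_sq w j)].
Proof.
elim: j => [w_gt0 | j IH lt_j1w].
  have occ0 : occupation_time w 0 = 1.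
    by rewrite /occupation_time Rminus_0_r; field; have := INR_ltn w_gt0; simpl; lra.
  rewrite /coupon_sq /coupon_mean /= occ0.
  have state0_cv p c : c = 1 -> Un_cv (moment p 0) c.
    move=> ->; apply: (Un_cv_ext (U := fun _ => 1)) (Un_cv_const 1) => N.
    by rewrite moment_state0.
  by split; apply: state0_cv; ring.
have [lim0 lim1 lim2] := IH (ltnW lt_j1w).
by split; [apply: moment0_cv_step | apply: moment1_cv_step | apply: moment2_cv_step].
Qed.

End CouponChain.

Lemma variance_series (p : nat -> R) m s :
  infinite_sum p 1 -> infinite_sum (fun n => INR n * p n) m ->
  infinite_sum (fun n => INR n ^ 2 * p n) s ->
  infinite_sum (fun n => (INR n - m) ^ 2 * p n) (s - m ^ 2).
Proof.
move=> mass mean sq.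
apply: (Un_cv_ext (U := fun N => sum_f_R0 (fun n => INR n ^ 2 * p n) N +
                             (-2 * m) * sum_f_R0 (fun n => INR n * p n) N +
                             m ^ 2 * sum_f_R0 p N)).
  by move=> N; rewrite -!sum_f_R0_scal -!sum_plus; apply: PartSum.sum_eq => n _; ring.
rewrite (_ : s - m ^ 2 = s + -2 * m * m + m ^ 2 * 1); last by ring.
by apply: CV_plus; [apply: CV_plus |]; [exact: sq | apply: Un_cv_scal..].
Qed.

Lemma coupon_mean_harm w k : (k < w)%N ->
  coupon_mean w k = INR w * (harm w - harm (w - k.+1)).
Proof.
elim: k => [|k IH] lt_kw.
  case: w lt_kw => // m lt_0m; rewrite subSS subn0.
  change (coupon_mean m.+1 0) with (INR m.+1 / (INR m.+1 - INR 0)).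
  change (harm m.+1) with (harm m + / INR m.+1).
  by have := INR_ltn lt_0m; change (INR 0) with 0 => ?; field; lra.
rewrite /coupon_mean tech5 -/(coupon_mean w k) IH ?(ltnW lt_kw) //.
have -> : (w - k.+1 = (w - k.+2).+1)%N by lia.
change (harm (w - k.+2).+1) with (harm (w - k.+2) + / INR (w - k.+2).+1).
have := INR_ltn lt_kw; rewrite /occupation_time !S_INR minus_INR; last by apply/leP; lia.
by rewrite !S_INR => ?; field; lra.
Qed.

Lemma coupon_sq_term w k : (k < w)%N ->
  2 * occupation_time w k * coupon_mean w k - occupation_time w k =
  INR w * (INR w + INR k) / (INR w - INR k) ^ 2
  + 2 * INR w ^ 2 / (INR w - INR k) * (harm w - harm (w - k)).
Proof.
move=> lt_kw; rewrite coupon_mean_harm // /occupation_time.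
have -> : (w - k = (w - k.+1).+1)%N by lia.
change (harm (w - k.+1).+1) with (harm (w - k.+1) + / INR (w - k.+1).+1).
have := INR_ltn lt_kw; rewrite !S_INR minus_INR; last by apply/leP; lia.
by rewrite !S_INR => ?; field; lra.
Qed.

Lemma INR_expn (a n : nat) : INR (a ^ n) = INR a ^ n.
Proof. by elim: n => [|n IH]; rewrite ?expn0 // expnS mult_INR IH. Qed.

Lemma INR_sum_ord m (F : nat -> nat) : (0 < m)%N ->
  INR (\sum_(k < m) F k) = sum_f_R0 (fun k => INR (F k)) (m - 1).
Proof.
case: m => // m _; rewrite subn1 /=.
elim: m => [|m IH]; first by rewrite big_ord_recr big_ord0.
by rewrite big_ord_recr /= plus_INR IH.
Qed.

Lemma card_set_sum (T : finType) (P : pred T) : #|[set t | P t]| = \sum_(t : T) (P t : nat).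
Proof.
by rewrite -sum1_card big_mkcond /=; apply: eq_bigr => t _; rewrite inE; case: (P t).
Qed.

Lemma binomial_succ_R w j : (j < w)%N ->
  INR 'C(w, j.+1) * INR j.+1 = (INR w - INR j) * INR 'C(w, j).
Proof.
move=> lt_jw; have := f_equal INR (mul_bin_left w j).
rewrite !mult_INR minus_INR; last by apply/leP; lia.
by rewrite Rmult_comm.
Qed.

Section Assembly.
Variables (W : finType) (Gs : seq {set W}).
Hypothesis w_gt0 : (0 < #|W|)%N.
Notation w := #|W|.

Lemma INR_w_gt0 : 0 < INR w.
Proof. exact: INR_ltn w_gt0. Qed.

(* P(X_n = j): j distinct values among n uniform draws from W. *)
Definition occupancy (n j : nat) : R := INR ('C(w, j) * onto_count n j) / INR w ^ n.

Lemma occupancy_ge0 n j : 0 <= occupancy n j.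
Proof.
apply: Rmult_le_pos; first exact: pos_INR.
by apply/Rlt_le/Rinv_0_lt_compat/pow_lt/INR_w_gt0.
Qed.

Lemma occupancy_start0 : occupancy 0 0 = 1.
Proof. by rewrite /occupancy bin0 /=; field. Qed.

Lemma occupancy_startS j : occupancy 0 j.+1 = 0.
Proof. by rewrite /occupancy /= muln0 /=; field. Qed.

Lemma occupancy_step0 n : occupancy n.+1 0 = 0.
Proof. by rewrite /occupancy /= mul0n muln0 /Rdiv Rmult_0_l. Qed.

Lemma occupancy_stepS n j : (j.+1 < w)%N ->
  occupancy n.+1 j.+1 =
  INR j.+1 / INR w * occupancy n j.+1 + (INR w - INR j) / INR w * occupancy n j.
Proof.
move=> lt_j1w; have := lt_0_INR j.+1 (Nat.lt_0_succ j) => j1_gt0.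
have binS : INR 'C(w, j.+1) = (INR w - INR j) * INR 'C(w, j) / INR j.+1.
  by rewrite -binomial_succ_R ?(ltnW lt_j1w) //; field; lra.
have := INR_w_gt0; have := pow_lt _ n INR_w_gt0.
rewrite /occupancy onto_countS -tech_pow_Rmult !mult_INR plus_INR binS => ? ?.
by field; lra.
Qed.

Definition q_increment (j : nat) : R := qk Gs j.+1 - qk Gs j.

Definition new_prob (j : nat) : R := (INR w - INR j) / INR w.

Lemma new_prob_occupation j : (j < w)%N -> new_prob j * occupation_time w j = 1.
Proof.
move=> /INR_ltn lt_jw; have := INR_w_gt0.
by rewrite /new_prob /occupation_time => ?; field; lra.
Qed.

Lemma n_completions_R j : (j < w)%N ->
  INR (n_completions Gs j) = q_increment j * INR 'C(w, j) * (INR w - INR j).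
Proof.
move=> lt_jw; have := f_equal INR (n_completions_tau Gs j).
rewrite plus_INR !mult_INR minus_INR; last by apply/leP; lia.
have C_gt0 k : (k <= w)%N -> 0 < INR 'C(w, k).
  by move=> le_kw; apply/lt_0_INR/ltP; rewrite bin_gt0.
have := C_gt0 _ (ltnW lt_jw); have := C_gt0 _ lt_jw => C1_gt0 C0_gt0.
have -> : INR w - INR j = INR 'C(w, j.+1) * INR j.+1 / INR 'C(w, j).
  by rewrite binomial_succ_R //; field; lra.
rewrite /q_increment /qk => completions.
by rewrite (_ : INR (n_completions Gs j) = INR j.+1 * INR (tau Gs j.+1) -
  INR 'C(w, j.+1) * INR j.+1 / INR 'C(w, j) * INR (tau Gs j)); [field; lra | lra].
Qed.

Lemma probTD0 k : (0 < k)%N -> probTD Gs k 0 = 0.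
Proof.
move=> k_gt0; rewrite /probTD card_set_sum big1 /=; first by rewrite /Rdiv Rmult_0_l.
move=> f _; rewrite /Dk_is drawn0 cards0.
by case: k k_gt0 => // k _; rewrite ltn0 andbF.
Qed.

Lemma probTD_succ n j : (j < w)%N ->
  probTD Gs j.+1 n.+1 = q_increment j * new_prob j * occupancy n j.
Proof.
move=> lt_jw; rewrite /probTD card_set_sum count_TD mult_INR INR_expn n_completions_R //.
have := INR_w_gt0; have := pow_lt _ n INR_w_gt0.
rewrite /new_prob /occupancy mult_INR /= => ? ?; field; lra.
Qed.

Lemma probT_succ n : probT Gs n.+1 = sum_f_R0 (fun j => probTD Gs j.+1 n.+1) (w - 1).
Proof.
rewrite /probT card_set_sum count_T.
rewrite (INR_sum_ord (fun k => \sum_(f : {ffun 'I_n.+1 -> W}) (T_is Gs f && Dk_is k.+1 f)) w_gt0).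
rewrite /Rdiv Rmult_comm -sum_f_R0_scal.
by apply: PartSum.sum_eq => j _; rewrite /probTD card_set_sum Rmult_comm.
Qed.

(* T = 0 exactly when the empty set is a transversal, i.e. when tau_0 = 1. *)
Lemma probT0 : probT Gs 0 = qk Gs 0.
Proof.
have T_is_empty (f : {ffun 'I_0 -> W}) : T_is Gs f = Defs.transversal Gs set0.
  by rewrite /T_is drawn0; case: (Defs.transversal Gs set0) => //=; apply/forallP => -[].
rewrite /probT /qk bin0 expn0 card_set_sum tau_sum.
under eq_bigr do rewrite T_is_empty.
rewrite sum_nat_const card_ffun card_ord expn0 mul1n.
rewrite (bigD1 set0) //= cards0 eqxx big1 ?addn0 // => X neX0.
by rewrite cards_eq0 (negbTE neX0).
Qed.

(* W itself is the unique w-element set, and a transversal. *)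
Lemma qk_full : (forall G, G \in Gs -> G != set0) -> qk Gs w = 1.
Proof.
move=> hG; rewrite /qk binn tau_sum (bigD1 setT) //= cardsT eqxx.
have -> : Defs.transversal Gs setT by apply/allP => G GinGs; rewrite setTI hG.
rewrite big1 ?addn0 /=; first by field.
move=> X neXT; suff -> : (#|X| == w) = false by [].
by apply/negbTE; apply: contra neXT => /eqP cardX; rewrite eqEcard subsetT cardsT cardX leqnn.
Qed.

Lemma stage_moment_cv p j L : (j < w)%N ->
  Un_cv (moment occupancy p j) (occupation_time w j * L) ->
  Un_cv (sum_f_R0 (fun n => INR n.+1 ^ p * probTD Gs j.+1 n.+1)) (q_increment j * L).
Proof.
move=> lt_jw cv_moment.
apply: (Un_cv_ext (U := fun N => q_increment j * new_prob j * moment occupancy p j N)).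
  move=> N; rewrite /moment -sum_f_R0_scal; apply: PartSum.sum_eq => n _.
  by rewrite probTD_succ // S_INR; ring.
rewrite (_ : q_increment j * L = q_increment j * new_prob j * (occupation_time w j * L)).
  exact: Un_cv_scal.
by rewrite -Rmult_assoc (Rmult_assoc _ (new_prob j)) new_prob_occupation //; ring.
Qed.

Lemma probT_moment_cv p (L : nat -> R) :
  (forall j, (j < w)%N -> Un_cv (moment occupancy p j) (occupation_time w j * L j)) ->
  Un_cv (sum_f_R0 (fun n => INR n ^ p * probT Gs n))
        (INR 0 ^ p * qk Gs 0 + sum_f_R0 (fun j => q_increment j * L j) (w - 1)).
Proof.
move=> cv_moments; rewrite -probT0; apply: (series_cv_succ (f := fun n => INR n ^ p * probT Gs n)).
apply: (Un_cv_ext (U := sum_f_R0 (fun n =>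
  sum_f_R0 (fun j => INR n.+1 ^ p * probTD Gs j.+1 n.+1) (w - 1)))).
  by move=> N; apply: PartSum.sum_eq => n _; rewrite probT_succ sum_f_R0_scal.
apply: finite_sum_series_cv => j le_j; apply: stage_moment_cv (cv_moments j _) => //; lia.
Qed.

Lemma occupancy_moments j : (j < w)%N ->
  [/\ Un_cv (moment occupancy 0 j) (occupation_time w j),
      Un_cv (moment occupancy 1 j) (occupation_time w j * coupon_mean w j) &
      Un_cv (moment occupancy 2 j) (occupation_time w j * coupon_sq w j)].
Proof.
apply: moment_limits; [exact: occupancy_ge0 | exact: occupancy_start0 |
  exact: occupancy_startS | exact: occupancy_step0 | exact: occupancy_stepS].
Qed.

Lemma probTD_series j : (j < w)%N ->
  infinite_sum (probTD Gs j.+1) (qk Gs j.+1 - qk Gs j).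
Proof.
move=> lt_jw; rewrite -[qk Gs j.+1 - _]Rplus_0_l -(probTD0 (ltn0Sn j)).
apply: series_cv_succ; rewrite -/(q_increment j) -[q_increment j]Rmult_1_r.
apply: (Un_cv_ext (U := sum_f_R0 (fun n => INR n.+1 ^ 0 * probTD Gs j.+1 n.+1))).
  by move=> N; apply: PartSum.sum_eq => n _; ring.
apply: stage_moment_cv => //; rewrite Rmult_1_r.
by case: (occupancy_moments lt_jw).
Qed.

Definition mean_T : R := sum_f_R0 (fun j => q_increment j * coupon_mean w j) (w - 1).
Definition second_moment_T : R := sum_f_R0 (fun j => q_increment j * coupon_sq w j) (w - 1).

Lemma probT_total : (forall G, G \in Gs -> G != set0) -> infinite_sum (probT Gs) 1.
Proof.
move=> hG; have := probT_moment_cv (p := 0) (L := fun=> 1).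
rewrite /q_increment (PartSum.sum_eq _ (fun j => qk Gs j.+1 - qk Gs j)) => [|j _]; last by ring.
rewrite telescope subn1 prednK // qk_full //= Rmult_1_l Rplus_minus => cvT.
apply: (Un_cv_ext (U := sum_f_R0 (fun n => INR n ^ 0 * probT Gs n))).
  by move=> N; apply: PartSum.sum_eq => n _; ring.
by apply: cvT => j lt_jw; rewrite Rmult_1_r; case: (occupancy_moments lt_jw).
Qed.

Lemma probT_mean : infinite_sum (fun n => INR n * probT Gs n) mean_T.
Proof.
have := probT_moment_cv (p := 1) (L := coupon_mean w).
rewrite [INR 0 ^ 1 * _](_ : _ = 0) ?Rplus_0_l => [cvT|]; last by rewrite /=; ring.
apply: (Un_cv_ext (U := sum_f_R0 (fun n => INR n ^ 1 * probT Gs n))).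
  by move=> N; apply: PartSum.sum_eq => n _; ring.
by apply: cvT => j lt_jw; case: (occupancy_moments lt_jw).
Qed.

Lemma probT_second_moment : infinite_sum (fun n => INR n ^ 2 * probT Gs n) second_moment_T.
Proof.
have := probT_moment_cv (p := 2) (L := coupon_sq w).
rewrite [INR 0 ^ 2 * _](_ : _ = 0) ?Rplus_0_l => [cvT|]; last by rewrite /=; ring.
by apply: cvT => j lt_jw; case: (occupancy_moments lt_jw).
Qed.

Lemma second_moment_T_closed_form : (forall G, G \in Gs -> G != set0) ->
  second_moment_T = sum_f_R0 (fun k => (1 - qk Gs k) *
     (INR w * (INR w + INR k) / (INR w - INR k) ^ 2
      + 2 * INR w ^ 2 / (INR w - INR k) * (harm w - harm (w - k)))) (w - 1).
Proof.
move=> hG; rewrite /second_moment_T /q_increment /coupon_sq abel_summation.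
rewrite subn1 prednK // qk_full //; apply: PartSum.sum_eq => k /leP le_k.
by rewrite coupon_sq_term //; lia.
Qed.

End Assembly.

Theorem mainTheorem3 (W : finType) (Gs : seq {set W})
    (hw : (0 < #|W|)%N) (hG : forall G, G \in Gs -> G != set0) :
  (forall k : nat, (1 <= k <= #|W|)%N ->
     infinite_sum (fun n => probTD Gs k n) (qk Gs k - qk Gs (k - 1)))
  /\
  exists ET V : R,
    infinite_sum (fun n => INR n * probT Gs n) ET /\
    infinite_sum (fun n => (INR n - ET) ^ 2 * probT Gs n) V /\
    V = (sum_f_R0 (fun k =>
           (1 - qk Gs k) *
           ((INR #|W|) * ((INR #|W|) + INR k) / ((INR #|W|) - INR k) ^ 2
            + 2 * (INR #|W|) ^ 2 / ((INR #|W|) - INR k)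
                * (harm #|W| - harm (#|W| - k)%N)))
         (#|W| - 1)%N
         - ET ^ 2).
Proof.
split.
  by case=> // j /andP [_ lt_jw]; rewrite subn1; exact: probTD_series.
exists (mean_T Gs), (second_moment_T Gs - mean_T Gs ^ 2); split; [|split].
- exact: probT_mean.
- by apply: variance_series; [exact: probT_total | exact: probT_mean | exact: probT_second_moment].
- by rewrite second_moment_T_closed_form.
Qed.
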